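(* Let $\mathbb{F}$ be a field and let $G$ be a finite absolutely irreducible subgroup of $\mathrm{GL}(n,\mathbb{F})$ that is self-normalizing in $\mathrm{GL}(n,\mathbb{F})$ modulo scalars (i.e., $N_{\mathrm{GL}(n,\mathbb{F})}(G)=G\cdot Z$ where $Z$ is the group of scalar matrices). If $G$ has precisely $|\mathrm{Out}(G)|$ inequivalent faithful absolutely irreducible representations in $\mathrm{GL}(n,\mathbb{F})$, then every absolutely irreducible subgroup of $\mathrm{GL}(n,\mathbb{F})$ isomorphic to $G$ is $\mathrm{GL}(n,\mathbb{F})$-conjugate to $G$. *)

From mathcomp Require Import all_boot all_order all_algebra all_fingroup all_solvable all_character.
Set Implicit Arguments. Unset Strict Implicit. Unset Printing Implicit Defensive.
Import GRing.Theory.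
Local Open Scope ring_scope.

(* A finite subgroup of GL(n,F) isomorphic to an abstract finite group G is
   represented as the image of a faithful representation rG : G -> GL(n,F). *)

Definition in_image (F : fieldType) (gT : finGroupType) (G : {group gT}) (n : nat)
  (rG : mx_representation F G n) (A : 'M[F]_n) : Prop :=
  exists2 g, g \in G & A = rG g.

Definition faithful_abs_irr (F : fieldType) (gT : finGroupType) (G : {group gT}) (n : nat)
  (rG : mx_representation F G n) : bool :=
  mx_faithful rG && mx_absolutely_irreducible rG.

Definition self_normalizing_mod_scalars (F : fieldType) (gT : finGroupType)
  (G : {group gT}) (n : nat) (rG : mx_representation F G n) : Prop :=
  forall P : 'M[F]_n, P \in unitmx ->
    (forall A, in_image rG A <-> in_image rG (invmx P *m A *m P)) ->
    exists2 g, g \in G & exists2 c : F, c != 0 & P = rG g *m c%:M.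

Definition Inn (gT : finGroupType) (G : {group gT}) : {set {perm gT}} :=
  (conj_aut G @* G)%g.
Definition out_order (gT : finGroupType) (G : {group gT}) : nat :=
  #|Aut G : Inn G|%g.

Definition num_faithful_abs_irr_classes (F : fieldType) (gT : finGroupType)
  (G : {group gT}) (n k : nat) : Prop :=
  exists reps : 'I_k -> mx_representation F G n,
    [/\ forall i, faithful_abs_irr (reps i),
        forall i j, mx_rsim (reps i) (reps j) -> i = j
      & forall rG' : mx_representation F G n, faithful_abs_irr rG' ->
          exists i, mx_rsim rG' (reps i)].

From mathcomp Require Import all_boot all_order all_algebra all_fingroup all_solvable all_character.
From Stdlib Require Import ClassicalEpsilon.
Set Implicit Arguments. Unset Strict Implicit. Unset Printing Implicit Defensive.
Import GRing.Theory.
Local Open Scope ring_scope.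

(* Twisting rG by automorphisms a of G gives faithful absolutely irreducible
   representations rG o a.  An intertwiner between rG o a and rG o b conjugates
   rG(G) onto itself, so by self-normalization it is rG(g) times a scalar, which
   forces b = a o (conjugation by g).  Hence the twists realize |Out(G)|
   pairwise inequivalent representations, i.e. all of them; so for any faithful
   H = f(G) the representation rH o f is equivalent to some rG o b, and the
   intertwiner conjugates rH(H) onto rG(G). *)

Definition decb (P : Prop) : bool :=
  if excluded_middle_informative P then true else false.

Lemma decbP P : reflect P (decb P).
Proof. by rewrite /decb; case: excluded_middle_informative => h; constructor. Qed.

Lemma mem_imset_cover (I T : finType) (psi : I -> T) (C : {set T}) :
  (#|I| <= #|C|)%N -> C \subset [set psi i | i : I] -> forall i, psi i \in C.
Proof.
move=> leIC sCim i.
suff /eqP -> : C == [set psi i | i : I] by exact: imset_f.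
by rewrite eqEcard sCim (leq_trans (leq_imset_card _ _)) // cardsT.
Qed.

Lemma in_image_intertwine (F : fieldType) (gT : finGroupType) (G : {group gT})
    n (r1 r2 : mx_representation F G n) (B : 'M[F]_n) :
    B \in unitmx -> {in G, forall x, r1 x *m B = B *m r2 x} ->
  forall A, in_image r1 A <-> in_image r2 (invmx B *m A *m B).
Proof.
move=> uB hom A; split=> [[x Gx ->] | [x Gx defA]]; exists x => //.
  by rewrite -mulmxA hom // mulKmx.
by rewrite -(mulmxK uB (r1 x)) hom // -defA !mulmxA mulmxV // mul1mx mulmxK.
Qed.

Lemma Inn_conj_aut (gT : finGroupType) (G : {group gT}) g :
  g \in G -> conj_aut G g \in Inn G.
Proof. by move=> Gg; rewrite /Inn mem_morphim // (subsetP (normG G)). Qed.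

Lemma Inn_sub_Aut (gT : finGroupType) (G : {group gT}) : (Inn G \subset Aut G)%g.
Proof. exact: Aut_conj_aut. Qed.

Section PullbackRepr.

Variables (F : fieldType) (gT hT : finGroupType) (G : {group gT}) (K : {group hT}).
Variables (f : {morphism G >-> hT}) (eqK : (K :==: f @* G)%g) (n : nat).
Variable rK : mx_representation F K n.

Definition pull_repr : mx_representation F G n :=
  morphim_repr (eqg_repr rK eqK) (subxx G).

Lemma pull_reprE x : pull_repr x = rK (f x).
Proof. by []. Qed.

Lemma in_image_pull_repr A : in_image pull_repr A <-> in_image rK A.
Proof.
have defK : K = (f @* G)%g :> {set hT} by apply/eqP.
split=> [[x Gx ->] | [y Ky ->]]; first by exists (f x); rewrite // defK mem_morphim.
have /morphimP[x _ Gx ->] : y \in (f @* G)%g by rewrite -defK.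
by exists x.
Qed.

Lemma pull_repr_faithful_abs_irr :
  ('injm f)%g -> faithful_abs_irr rK -> faithful_abs_irr pull_repr.
Proof.
move=> injf /andP[faithK absK]; apply/andP; split.
  rewrite /mx_faithful rker_morphim rker_eqg.
  by apply: subset_trans (subsetIr _ _) (subset_trans (morphpreS _ faithK) injf).
by rewrite morphim_mx_abs_irr eqg_mx_abs_irr.
Qed.

End PullbackRepr.

Section AutomorphismTwists.

Variables (F : fieldType) (gT : finGroupType) (G : {group gT}) (n : nat).
Variable rG : mx_representation F G n.

Definition aut_repr a (Aa : a \in Aut G) : mx_representation F G n :=
  pull_repr (introT eqP (esym (im_autm Aa))) rG.

Lemma aut_reprE a (Aa : a \in Aut G) x : aut_repr Aa x = rG (a x).
Proof. by rewrite /aut_repr pull_reprE /= autmE. Qed.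

Lemma in_image_aut_repr a (Aa : a \in Aut G) A :
  in_image (aut_repr Aa) A <-> in_image rG A.
Proof. exact: in_image_pull_repr. Qed.

Hypothesis faithfulG : mx_faithful rG.

Lemma aut_repr_faithful_abs_irr a (Aa : a \in Aut G) :
  mx_absolutely_irreducible rG -> faithful_abs_irr (aut_repr Aa).
Proof.
by move=> absG; apply: pull_repr_faithful_abs_irr (injm_autm Aa) _; apply/andP.
Qed.

Hypothesis snG : self_normalizing_mod_scalars rG.

Lemma aut_repr_rsim_lcoset a b (Aa : a \in Aut G) (Ab : b \in Aut G) :
  mx_rsim (aut_repr Aa) (aut_repr Ab) -> b \in (a *: Inn G)%g.
Proof.
case=> B _ uB hom; rewrite row_free_unit in uB.
have normB A : in_image rG A <-> in_image rG (invmx B *m A *m B).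
  rewrite -(in_image_aut_repr Aa A) -(in_image_aut_repr Ab).
  exact: (in_image_intertwine (r1 := aut_repr Aa) uB hom A).
have [g Gg [c nz_c defB]] := snG uB normB.
apply/lcosetP; exists (conj_aut G g); first exact: Inn_conj_aut.
have Aut_g := subsetP (Inn_sub_Aut G) _ (Inn_conj_aut Gg).
apply: (eq_Aut Ab (groupM Aa Aut_g)) => x Gx.
have [Gax Gbx] := (Aut_closed Aa Gx, Aut_closed Ab Gx).
rewrite permM conj_autE // conjgE; apply/(mulgI g)/(mx_faithful_inj faithfulG).
- by rewrite groupM.
- by rewrite !groupM ?groupV.
rewrite mulKVg !repr_mxM //; apply/(scalemx_inj nz_c).
rewrite scalemxAl scalemxAr -mul_mx_scalar -defB.
by have := hom x Gx; rewrite !aut_reprE => ->.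
Qed.

Lemma aut_repr_rsim_exhaustive :
    mx_absolutely_irreducible rG ->
    num_faithful_abs_irr_classes F G n (out_order G) ->
  forall rG' : mx_representation F G n, faithful_abs_irr rG' ->
  exists b (Ab : b \in Aut G), mx_rsim rG' (aut_repr Ab).
Proof.
move=> absG [reps [_ _ repsC]] rG' /repsC[i sim_i].
pose twist j :=
  [pick a | decb (exists Aa : a \in Aut G, mx_rsim (reps j) (aut_repr Aa))].
(* psi j is the coset of Inn G realized by reps j, or set0 if there is none;
   psi maps |Out(G)| indices onto all |Out(G)| cosets, so it never hits set0. *)
pose psi j := if twist j is Some a then (a *: Inn G)%g else set0.
have psi_cover :
  (lcosets (Inn G) (Aut G) \subset [set psi j | j : 'I_(out_order G)])%g.
  apply/subsetP => _ /lcosetsP[a Aa ->].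
  have [j sim_j] := repsC _ (aut_repr_faithful_abs_irr Aa absG).
  apply/imsetP; exists j => //; rewrite /psi /twist.
  case: pickP => [b /decbP[Ab sim_b] | no_twist].
    apply/esym/lcoset_eqP.
    by have := aut_repr_rsim_lcoset (mx_rsim_trans sim_j sim_b).
  by have := no_twist a; rewrite (introT (decbP _)) //; exists Aa; apply: mx_rsim_sym.
have := mem_imset_cover _ psi_cover i; rewrite card_ord card_lcosets => /(_ (leqnn _)).
rewrite /psi /twist; case: pickP => [b /decbP[Ab sim_b] _ | _].
  by exists b, Ab; apply: mx_rsim_trans sim_i sim_b.
by case/lcosetsP=> a _ /setP/(_ a); rewrite inE lcoset_refl.
Qed.

End AutomorphismTwists.

Theorem corollary11p2 (F : fieldType) (n : nat) (gT : finGroupType) (G : {group gT})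
  (rG : mx_representation F G n) :
  faithful_abs_irr rG ->
  self_normalizing_mod_scalars rG ->
  num_faithful_abs_irr_classes F G n (out_order G) ->
  forall (hT : finGroupType) (H : {group hT}) (rH : mx_representation F H n),
    faithful_abs_irr rH -> (H \isog G)%g ->
    exists2 P : 'M[F]_n, P \in unitmx &
      forall A : 'M[F]_n, in_image rH A <-> in_image rG (invmx P *m A *m P).
Proof.
move=> /andP[faithG absG] snG nclasses hT H rH fH.
rewrite isog_sym => /isogP[f injf imf].
have eqH : (H :==: f @* G)%g by rewrite imf.
have fHG := pull_repr_faithful_abs_irr eqH injf fH.
have [b [Ab [B _ uB hom]]] := aut_repr_rsim_exhaustive faithG snG absG nclasses fHG.
rewrite row_free_unit in uB; exists B => // A.
rewrite -(in_image_pull_repr eqH) -(in_image_aut_repr rG Ab).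
exact: (in_image_intertwine uB hom A).
Qed.
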